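(* Let $k\ge 3$ be odd and let $G$ be a $k$-uniform hyperpath of length $r\ge 3$, with Laplacian tensor $\mathcal L$. Then $\lambda(\mathcal L)=2$.
   Context: A $k$-uniform hyperpath of length $d$ has vertex set $\{i_{1,1},\ldots,i_{1,k}\}\cup\{i_{j,s}: 2\le j\le d,\ 2\le s\le k\}$ (all distinct) and edges $\{i_{1,1},\ldots,i_{1,k}\}$ and $\{i_{j-1,k},i_{j,2},\ldots,i_{j,k}\}$ for $2\le j\le d$. For a $k$-uniform hypergraph $G=(V,E)$ with $V=[n]$ and $d_i$ the number of edges containing $i$, the Laplacian tensor $\mathcal L=\mathcal D-\mathcal A$ ($\mathcal D$ diagonal with entries $d_i$, $\mathcal A$ with entries $\frac1{(k-1)!}$ at index tuples forming an edge and $0$ otherwise) satisfies $(\mathcal L\mathbf x^{k-1})_i=d_ix_i^{k-1}-\sum_{e\in E,\,i\in e}\prod_{s\in e\setminus\{i\}}x_s$. A real $\lambda$ is an H-eigenvalue of $\mathcal L$ if some nonzero $\mathbf x\in\mathbb R^n$ satisfies $(\mathcal L\mathbf x^{k-1})_i=\lambda x_i^{k-1}$ for all $i$; $\lambda(\mathcal L)$ is the largest H-eigenvalue. *)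

From HB Require Import structures.
From mathcomp Require Import all_boot all_order all_algebra.
From mathcomp Require Import reals.
Import Order.TTheory GRing.Theory Num.Theory.
Local Open Scope ring_scope.

Definition hp_valid (k d j s : nat) : bool :=
  ((j == 1%N) && (1 <= s <= k)%N) || ((2 <= j <= d)%N && (2 <= s <= k)%N).

Definition hp_edge1 (n k : nat) (lab : nat -> nat -> 'I_n) : {set 'I_n} :=
  [set v | [exists s : 'I_k.+1, (1 <= s)%N && (v == lab 1%N s)]].

Definition hp_edgej (n k : nat) (lab : nat -> nat -> 'I_n) (j : nat) : {set 'I_n} :=
  lab j.-1 k |: [set v | [exists s : 'I_k.+1, (2 <= s)%N && (v == lab j s)]].

(* E is (the edge set of) a k-uniform hyperpath of length d on vertex set [n]:
   the vertices are labelled bijectively by the valid pairs (j, s), and the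
   edges are exactly {i_{1,1},...,i_{1,k}} and {i_{j-1,k}, i_{j,2},...,i_{j,k}},
   2 <= j <= d. *)
Definition is_hyperpath (k d n : nat) (E : {set {set 'I_n}}) : Prop :=
  exists lab : nat -> nat -> 'I_n,
    [/\ (forall j s j' s', hp_valid k d j s -> hp_valid k d j' s' ->
           lab j s = lab j' s' -> j = j' /\ s = s'),
        (forall v : 'I_n, exists j s, hp_valid k d j s /\ v = lab j s) &
        E = hp_edge1 n k lab |: [set hp_edgej n k lab j | j : 'I_d.+1 & (2 <= j)%N]].

Definition hdeg (n : nat) (E : {set {set 'I_n}}) (i : 'I_n) : nat :=
  #|[set e in E | i \in e]|.

(* Order-k tensors of dimension n, indexed by a first index i and the
   remaining k-1 indices t : 'I_(k-1) -> 'I_n. *)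
Definition tensor (R : Type) (n k : nat) := 'I_n -> {ffun 'I_k.-1 -> 'I_n} -> R.

Definition adj_tensor (R : realType) (n k : nat) (E : {set {set 'I_n}}) : tensor R n k :=
  fun i t => if (i |: [set t j | j : 'I_k.-1]) \in E then ((k.-1)`!)%:R^-1 else 0.

Definition deg_tensor (R : realType) (n k : nat) (E : {set {set 'I_n}}) : tensor R n k :=
  fun i t => if [forall j, t j == i] then (hdeg n E i)%:R else 0.

Definition laplacian (R : realType) (n k : nat) (E : {set {set 'I_n}}) : tensor R n k :=
  fun i t => deg_tensor R n k E i t - adj_tensor R n k E i t.

Definition tmul (R : realType) (n k : nat) (T : tensor R n k) (x : 'I_n -> R) (i : 'I_n) : R :=
  \sum_(t : {ffun 'I_k.-1 -> 'I_n}) T i t * \prod_(j : 'I_k.-1) x (t j).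

Definition is_H_eigenvalue (R : realType) (n k : nat) (T : tensor R n k) (lam : R) : Prop :=
  exists x : 'I_n -> R, (exists i, x i != 0) /\
    forall i, tmul R n k T x i = lam * x i ^+ k.-1.

Definition is_largest_H_eigenvalue (R : realType) (n k : nat) (T : tensor R n k) (lam : R) : Prop :=
  is_H_eigenvalue R n k T lam /\ forall mu, is_H_eigenvalue R n k T mu -> mu <= lam.

(* The indicator vector of the vertex shared by the first two edges is an
   H-eigenvector for 2: every edge through a vertex contains a third vertex,
   where the indicator vanishes, so L x = D x there.
   Conversely, let x be an H-eigenvector for mu > 2.  The equations at the
   degree-one vertices of edge j force them to share one value a_j and give
   P_j = (1 - mu) a_j^k for the product P_j of x over edge j; the equation at
   the vertex y_j shared by edges j and j+1 reads
   (mu - 2) y_j^k = (mu - 1) (a_j^k + a_(j+1)^k).  Odd powers preserve signs,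
   so a_j y_j <= 0 propagates along the path; on the last edge this forces
   a_d = 0, and the junction equations then carry the zeros back, so x = 0. *)

From HB Require Import structures.
From mathcomp Require Import all_boot all_order all_algebra.
From mathcomp Require Import reals.
From mathcomp Require Import zify ring lra.

Set Implicit Arguments.
Unset Strict Implicit.
Unset Printing Implicit Defensive.

Import Order.TTheory GRing.Theory Num.Theory.
Local Open Scope ring_scope.

Section UniformLaplacian.
Variables (R : realType) (n : nat).

Lemma card_ffun_onto m (T : {set 'I_n}) : #|T| = m ->
  #|[pred t : {ffun 'I_m -> 'I_n} | [set t j | j : 'I_m] == T]| = m`!.
Proof.
move=> cT; have -> : m`! = #|T| ^_ #|'I_m| by rewrite cT card_ord ffactnn.
rewrite -card_inj_ffuns_on; apply: eq_card => t; rewrite !inE.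
apply/eqP/andP => [imT | [/ffun_onP tT /injectiveP tinj]].
  split; first by apply/ffun_onP => j; rewrite -imT imset_f.
  have /imset_injP tinj : #|[set t j | j : 'I_m]| == #|[pred j : 'I_m | true]|.
    by rewrite imT cT card_ord.
  by apply/injectiveP => j1 j2; apply: tinj.
apply/eqP; rewrite eqEcard card_imset // card_ord cT leqnn andbT.
by apply/subsetP => _ /imsetP [j _ ->]; apply: tT.
Qed.

Lemma sum_prod_ffun_onto m (T : {set 'I_n}) (x : 'I_n -> R) : #|T| = m ->
  \sum_(t : {ffun 'I_m -> 'I_n} | [set t j | j : 'I_m] == T) \prod_(j : 'I_m) x (t j)
  = (m`!)%:R * \prod_(u in T) x u.
Proof.
move=> cT; rewrite [LHS](eq_bigr (fun _ => \prod_(u in T) x u)) => [|t /eqP imT].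
  by rewrite sumr_const card_ffun_onto // mulr_natl.
have /imset_injP tinj : #|[set t j | j : 'I_m]| == #|[pred j : 'I_m | true]|.
  by rewrite imT cT card_ord.
by rewrite -imT big_imset.
Qed.

Lemma setU1_imset_eq m (i : 'I_n) (e : {set 'I_n}) (t : {ffun 'I_m -> 'I_n}) :
  i \in e -> #|e| = m.+1 ->
  (i |: [set t j | j : 'I_m] == e) = ([set t j | j : 'I_m] == e :\ i).
Proof.
move=> ie ce; apply/eqP/eqP => [He | ->]; last by rewrite setD1K.
apply/eqP; rewrite eq_sym eqEcard; apply/andP; split.
  apply/subsetP => u; rewrite !inE => /andP [ui].
  by rewrite -He !inE (negPf ui).
rewrite (cardsD1 i) ie add1n in ce; case: ce => ->.
by rewrite -[X in (_ <= X)%N]card_ord leq_imset_card.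
Qed.

Lemma tmul_deg_tensor k (E : {set {set 'I_n}}) (x : 'I_n -> R) i :
  tmul R n k (deg_tensor R n k E) x i = (hdeg n E i)%:R * x i ^+ k.-1.
Proof.
rewrite /tmul (bigD1 [ffun => i]) //= [X in _ + X]big1 ?addr0 => [|t tne].
  rewrite /deg_tensor ifT; last by apply/forallP => j; rewrite ffunE.
  by rewrite (eq_bigr (fun _ => x i)) ?prodr_const ?card_ord // => j; rewrite ffunE.
rewrite /deg_tensor ifF ?mul0r //; apply: contraNF tne => /forallP tE.
by apply/eqP/ffunP => j; rewrite ffunE; apply/eqP.
Qed.

Lemma tmul_adj_tensor_uniform k (E : {set {set 'I_n}}) (x : 'I_n -> R) i :
  (0 < k)%N -> (forall e, e \in E -> #|e| = k) ->
  tmul R n k (adj_tensor R n k E) x i = \sum_(e in [set e in E | i \in e]) \prod_(u in e :\ i) x u.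
Proof.
move=> k0 cE; pose supp (t : {ffun 'I_k.-1 -> 'I_n}) := i |: [set t j | j : 'I_k.-1].
rewrite /tmul (bigID (fun t => supp t \in E)) /= [X in _ + X]big1 ?addr0 => [|t]; last first.
  by rewrite /adj_tensor => /negPf ->; rewrite mul0r.
rewrite (eq_bigl (fun e => (e \in E) && (i \in e))) => [|e]; last by rewrite inE.
rewrite (partition_big supp (fun e => (e \in E) && (i \in e))) => [|t ->]; last first.
  exact: setU11.
apply: eq_bigr => e /andP [eE ie].
have ce : #|e :\ i| = k.-1 by move: (cE e eE); rewrite (cardsD1 i e) ie => <-.
rewrite (eq_big (fun t : {ffun 'I_k.-1 -> 'I_n} => [set t j | j : 'I_k.-1] == e :\ i)
  (fun t : {ffun 'I_k.-1 -> 'I_n} => ((k.-1)`!)%:R^-1 * \prod_(j < k.-1) x (t j)))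
  => [|t|t /andP [_ /eqP te]].
- rewrite -mulr_sumr sum_prod_ffun_onto // mulrA mulVf ?mul1r //.
  by rewrite pnatr_eq0 -lt0n fact_gt0.
- rewrite /supp -setU1_imset_eq // ?prednK ?cE //.
  by case: eqP => [->|]; rewrite ?eE ?andbF.
- by rewrite /adj_tensor -/(supp t) te eE.
Qed.

Lemma tmul_laplacian_uniform k (E : {set {set 'I_n}}) (x : 'I_n -> R) i :
  (0 < k)%N -> (forall e, e \in E -> #|e| = k) ->
  tmul R n k (laplacian R n k E) x i =
  \sum_(e in [set e in E | i \in e]) (x i ^+ k.-1 - \prod_(u in e :\ i) x u).
Proof.
move=> k0 cE; rewrite sumrB sumr_const -(tmul_adj_tensor_uniform x i k0 cE) -mulr_natl.
rewrite -tmul_deg_tensor -sumrB; apply: eq_bigr => t _; exact: mulrBl.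
Qed.

Lemma mulr_tmul_laplacian_uniform k (E : {set {set 'I_n}}) (x : 'I_n -> R) i :
  (0 < k)%N -> (forall e, e \in E -> #|e| = k) ->
  x i * tmul R n k (laplacian R n k E) x i =
  \sum_(e in [set e in E | i \in e]) (x i ^+ k - \prod_(u in e) x u).
Proof.
move=> k0 cE; rewrite tmul_laplacian_uniform // mulr_sumr; apply: eq_bigr => e.
by rewrite inE => /andP [_ ie]; rewrite mulrBr -exprS prednK // (big_setD1 i ie).
Qed.

Lemma tmul_laplacian_indicator k (E : {set {set 'I_n}}) (u i : 'I_n) :
  (3 <= k)%N -> (forall e, e \in E -> #|e| = k) ->
  tmul R n k (laplacian R n k E) (fun v => (v == u)%:R) i =
  (hdeg n E i)%:R * (i == u)%:R ^+ k.-1.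
Proof.
move=> k3 cE; rewrite tmul_laplacian_uniform //; last lia.
rewrite /hdeg [RHS]mulr_natl -sumr_const; apply: eq_bigr => e; rewrite inE => /andP [eE ie].
have : (0 < #|e :\ i :\ u|)%N.
  have : #|e| = ((i \in e) + ((u \in e :\ i) + #|e :\ i :\ u|))%N by rewrite -!cardsD1.
  by rewrite cE // ie; case: (u \in _) => /=; lia.
case/card_gt0P => w; rewrite !inE => /and3P [wu wi we].
by rewrite (big_setD1 w) /= ?inE ?wi ?we // (negPf wu) mul0r subr0.
Qed.

End UniformLaplacian.

Section OddPowers.
Variables (R : realFieldType) (k : nat).
Hypothesis k_odd : odd k.

Lemma mulr_oddX_ge0 (x y : R) : (0 <= y * x ^+ k) = (0 <= y * x).
Proof.
have [-> | x0] := eqVneq x 0; first by rewrite expr0n; case: (k) k_odd.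
have xk1 : 0 < x ^+ k.-1 by rewrite exprn_even_gt0 ?x0 ?orbT //; case: (k) k_odd.
by rewrite -(prednK (odd_gt0 k_odd)) exprS mulrA pmulr_lge0.
Qed.

Lemma mulr_oddX_le0 (x y : R) : (y * x ^+ k <= 0) = (y * x <= 0).
Proof. by rewrite -oppr_ge0 -mulNr mulr_oddX_ge0 mulNr oppr_ge0. Qed.

Lemma oddX_inj : injective (fun x : R => x ^+ k).
Proof.
have k0 := odd_gt0 k_odd.
suff H (x w : R) : 0 <= x -> x ^+ k = w ^+ k -> x = w.
  move=> x w /= e; have [x0 | x_lt0] := leP 0 x; first exact: H.
  apply: oppr_inj; apply: H; first by rewrite oppr_ge0 ltW.
  by rewrite (exprNn x) (exprNn w) e.
move=> x0 e; have w0 : 0 <= w by rewrite -(exprn_odd_ge0 _ k_odd) -e exprn_odd_ge0.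
by apply/eqP; rewrite -(eqrXn2 k0 x0 w0) e.
Qed.

End OddPowers.

Section EdgeCancellation.
Variables (R : idomainType) (k : nat).

Lemma cancel_exprpred (c a y : R) : (0 < k)%N -> a != 0 ->
  y * a ^+ k.-1 = c * a ^+ k -> y = c * a.
Proof.
move=> k0 a0 H; apply: (mulIf (expf_neq0 k.-1 a0)).
by rewrite /= -mulrA -exprS prednK.
Qed.

Lemma cancel_exprpred2 (c b y y' : R) : (1 < k)%N -> b != 0 ->
  y * y' * b ^+ k.-2 = c * b ^+ k -> y * y' = c * b ^+ 2.
Proof.
move=> k1 b0 H; apply: (mulIf (expf_neq0 k.-2 b0)).
by rewrite /= H -mulrA -exprD; congr (_ * _ ^+ _); lia.
Qed.

End EdgeCancellation.

Section JunctionEquation.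
Variables (R : realFieldType) (k : nat) (mu : R).
Hypotheses (k_odd : odd k) (mu_gt2 : 2 < mu).
Let mu_gt1 : 1 < mu. Proof. by move: mu_gt2; lra. Qed.

Lemma junction_sign (a b y : R) : a * y <= 0 ->
  (y ^+ k - (1 - mu) * a ^+ k) + (y ^+ k - (1 - mu) * b ^+ k) = mu * y ^+ k ->
  0 <= b * y.
Proof.
move=> ay H; have e : (mu - 1) * b ^+ k = (mu - 2) * y ^+ k - (mu - 1) * a ^+ k by lra.
have ya : y * a ^+ k <= 0 by rewrite mulr_oddX_le0 // mulrC.
have yy : 0 <= y * y ^+ k by rewrite -exprS exprn_even_ge0 //= k_odd.
have eyb : (mu - 1) * (y * b ^+ k) = (mu - 2) * (y * y ^+ k) - (mu - 1) * (y * a ^+ k).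
  by rewrite mulrCA e; ring.
have : 0 <= (mu - 1) * (y * b ^+ k).
  by rewrite eyb subr_ge0 (le_trans (mulr_ge0_le0 _ ya)) ?(mulr_ge0 _ yy) ?subr_ge0 ?ltW.
by rewrite pmulr_rge0 ?subr_gt0 // mulr_oddX_ge0 // mulrC.
Qed.

Lemma junction_zero (a b y : R) : a * y <= 0 -> b = 0 ->
  (y ^+ k - (1 - mu) * a ^+ k) + (y ^+ k - (1 - mu) * b ^+ k) = mu * y ^+ k ->
  a = 0 /\ y = 0.
Proof.
have zk : (0 : R) ^+ k = 0 by rewrite expr0n; case: (k) k_odd.
move=> ay -> H; rewrite zk mulr0 subr0 in H.
have e : (mu - 2) * y ^+ k = (mu - 1) * a ^+ k by lra.
have ya : y * a ^+ k <= 0 by rewrite mulr_oddX_le0 // mulrC.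
have : y * y ^+ k <= 0.
  have : (mu - 2) * (y * y ^+ k) <= 0 by rewrite mulrCA e mulrCA mulr_ge0_le0 // subr_ge0 ltW.
  by rewrite pmulr_rle0 // subr_gt0.
rewrite -exprS exprn_even_le0 //= ?k_odd // => /eqP y0; split=> //.
move: e; rewrite y0 zk mulr0 => /esym/eqP.
by rewrite mulf_eq0 subr_eq0 (gt_eqF mu_gt1) expf_eq0 => /andP [_ /eqP].
Qed.

End JunctionEquation.

(* The eigen-equations of a hyperpath with r edges, in terms of the common
   value [a j] on the degree-one vertices of edge j, the value [y j] on the
   vertex shared by edges j and j+1, and the product [P j] over edge j. *)
Section ChainSystem.
Variables (R : realFieldType) (k r : nat) (mu : R) (a y P : nat -> R).
Hypotheses (k_odd : odd k) (k_ge3 : (3 <= k)%N) (r_ge2 : (2 <= r)%N) (mu_gt2 : 2 < mu).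
Hypothesis P_pendant : forall j, (1 <= j <= r)%N -> P j = (1 - mu) * a j ^+ k.
Hypothesis P_junction : forall j, (1 <= j < r)%N ->
  (y j ^+ k - P j) + (y j ^+ k - P j.+1) = mu * y j ^+ k.
Hypothesis P_first : P 1 = y 1 * a 1 ^+ k.-1.
Hypothesis P_inner : forall j, (1 < j < r)%N -> P j = y j.-1 * y j * a j ^+ k.-2.
Hypothesis P_last : P r = y r.-1 * a r ^+ k.-1.

Let mu_gt1 : 1 < mu. Proof. by move: mu_gt2; lra. Qed.

Let junction j : (1 <= j < r)%N ->
  (y j ^+ k - (1 - mu) * a j ^+ k) + (y j ^+ k - (1 - mu) * a j.+1 ^+ k) = mu * y j ^+ k.
Proof. by move=> jr; rewrite -!P_pendant ?P_junction //; lia. Qed.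

Lemma chain_sign j : (1 <= j < r)%N -> a j * y j <= 0.
Proof.
elim: j => // -[_ _ | j IH /andP [_ jr]].
  have [-> | a0] := eqVneq (a 1) 0; first by rewrite mul0r.
  have -> : y 1 = (1 - mu) * a 1.
    by apply: (cancel_exprpred (odd_gt0 k_odd) a0); rewrite -P_first P_pendant //; lia.
  by rewrite mulrCA -expr2 nmulr_rle0 ?sqr_ge0 // subr_lt0.
have jr1 : (1 <= j.+1 < r)%N by lia.
have a_y : 0 <= a j.+2 * y j.+1 by apply: (junction_sign k_odd mu_gt2 (IH jr1)); apply: junction.
have [-> | a0] := eqVneq (a j.+2) 0; first by rewrite mul0r.
have yy : y j.+1 * y j.+2 = (1 - mu) * a j.+2 ^+ 2.
  apply: (cancel_exprpred2 (ltnW k_ge3) a0).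
  rewrite -P_pendant ?P_inner //; lia.
have a2 : 0 < a j.+2 ^+ 2 by rewrite exprn_even_gt0.
rewrite leNgt; apply/negP => a_y'.
have : 0 <= (a j.+2 * y j.+1) * (a j.+2 * y j.+2) by rewrite mulr_ge0 // ltW.
rewrite mulrACA -expr2 yy mulrCA pmulr_lge0 ?(mulr_gt0 a2 a2) //; move: mu_gt1; lra.
Qed.

Lemma chain_last_pendant : a r = 0.
Proof.
have r1 : (1 <= r.-1 < r)%N by lia.
have a_y : 0 <= a r * y r.-1.
  have := junction_sign k_odd mu_gt2 (chain_sign r1) (junction r1).
  by rewrite (prednK (ltnW r_ge2)).
apply/eqP/negPn/negP => a0.
have y_r : y r.-1 = (1 - mu) * a r.
  by apply: (cancel_exprpred (odd_gt0 k_odd) a0); rewrite -P_last P_pendant //; lia.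
have a2 : 0 < a r ^+ 2 by rewrite exprn_even_gt0 ?a0 ?orbT.
by move: a_y mu_gt1; rewrite y_r mulrCA -expr2; nra.
Qed.

Lemma chain_pendant_zero j : (1 <= j <= r)%N -> a j = 0.
Proof.
suff a_end m : (m < r)%N -> a (r - m) = 0.
  by move=> jr; rewrite -(subKn (_ : j <= r)%N); [apply: a_end |]; lia.
elim: m => [|m IH] mr; first by rewrite subn0 chain_last_pendant.
have m1 : (1 <= r - m.+1 < r)%N by lia.
have a0 : a (r - m.+1).+1 = 0 by rewrite (_ : (r - m.+1).+1 = r - m)%N ?IH //; lia.
by case: (junction_zero k_odd mu_gt2 (chain_sign m1) a0 (junction m1)).
Qed.

Lemma chain_junction_zero j : (1 <= j < r)%N -> y j = 0.
Proof.
move=> jr; have a0 : a j.+1 = 0 by rewrite chain_pendant_zero //; lia.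
by case: (junction_zero k_odd mu_gt2 (chain_sign jr) a0 (junction jr)).
Qed.

Lemma chain_trivial :
  (forall j, (1 <= j <= r)%N -> a j = 0) /\ (forall j, (1 <= j < r)%N -> y j = 0).
Proof. by split=> j; [apply: chain_pendant_zero | apply: chain_junction_zero]. Qed.

End ChainSystem.

Section ProdAllButFew.
Variables (R : comRingType) (T : finType) (e : {set T}) (x : T -> R) (c : R).

Lemma prodr_const_but1 z : z \in e -> (forall u, u \in e -> u != z -> x u = c) ->
  \prod_(u in e) x u = x z * c ^+ #|e|.-1.
Proof.
move=> ze xc; rewrite (big_setD1 z ze) (eq_bigr (fun=> c)) => [|u]; last first.
  by rewrite !inE => /andP [uz ue]; apply: xc.
by rewrite prodr_const (cardsD1 z e) ze.
Qed.

Lemma prodr_const_but2 z z' : z \in e -> z' \in e -> z != z' ->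
  (forall u, u \in e -> u != z -> u != z' -> x u = c) ->
  \prod_(u in e) x u = x z * x z' * c ^+ #|e|.-2.
Proof.
move=> ze z'e zz xc; have z'ez : z' \in e :\ z by rewrite !inE eq_sym zz.
rewrite (big_setD1 z ze) (big_setD1 z' z'ez) /= mulrA (eq_bigr (fun=> c)) => [|u]; last first.
  by rewrite !inE => /and3P [uz' uz ue]; apply: xc.
by rewrite prodr_const (cardsD1 z e) (cardsD1 z' (e :\ z)) ze z'ez.
Qed.

End ProdAllButFew.

Lemma card_ord_geq N m : #|[set s : 'I_N | (m <= s)%N]| = (N - m)%N.
Proof.
rewrite -sum1_card (eq_bigl (fun i : 'I_N => (m <= i)%N)) => [|i]; last by rewrite inE.
by rewrite -(big_geq_mkord m N xpredT (fun _ => 1%N)) sum_nat_const_nat muln1.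
Qed.

Definition hp_edge n k (lab : nat -> nat -> 'I_n) j : {set 'I_n} :=
  if j == 1%N then hp_edge1 n k lab else hp_edgej n k lab j.

Section Hyperpath.
Variables (k d n : nat) (lab : nat -> nat -> 'I_n).
Hypothesis lab_inj : forall j s j' s', hp_valid k d j s -> hp_valid k d j' s' ->
  lab j s = lab j' s' -> j = j' /\ s = s'.
Hypothesis k_ge3 : (3 <= k)%N.

Local Notation edge := (hp_edge k lab).

Lemma mem_hp_edge j s j' : hp_valid k d j s -> (1 <= j' <= d)%N ->
  (lab j s \in edge j') = (j' == j) || ((s == k) && (j' == j.+1)).
Proof.
move=> vjs j'd; have sk : (s < k.+1)%N by move: vjs; rewrite /hp_valid; lia.
rewrite /hp_edge; case: eqP => [j'1 | j'n1].
  rewrite /hp_edge1 inE; apply/existsP/idP => [[s' /andP [s'1 /eqP e]] | ].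
    have v' : hp_valid k d 1 s' by move: (ltn_ord s') s'1; rewrite /hp_valid; lia.
    by have [-> _] := lab_inj vjs v' e; rewrite j'1 eqxx.
  rewrite j'1 => /orP [/eqP j1 | /andP [_ /eqP]]; last by move: vjs; rewrite /hp_valid; lia.
  by exists (Ordinal sk); rewrite /= -j1 eqxx andbT; move: vjs; rewrite /hp_valid; lia.
rewrite /hp_edgej !inE orbC; congr (_ || _).
  apply/existsP/eqP => [[s' /andP [s'2 /eqP e]] | ej].
    have v' : hp_valid k d j' s' by move: (ltn_ord s') s'2 j'n1 j'd; rewrite /hp_valid; lia.
    by have [-> _] := lab_inj vjs v' e.
  exists (Ordinal sk); rewrite /= ej eqxx andbT.
  by move: vjs j'n1 j'd; rewrite /hp_valid ej; lia.
apply/eqP/andP => [e | [/eqP -> /eqP ->] //].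
have v' : hp_valid k d j'.-1 k by move: j'n1 j'd k_ge3; rewrite /hp_valid; lia.
by have [e1 e2] := lab_inj vjs v' e; split; apply/eqP; lia.
Qed.

Lemma card_hp_edge j : (1 <= j <= d)%N -> #|edge j| = k.
Proof.
move=> jd; pose S m := [set s : 'I_k.+1 | (m <= s)%N].
pose labo j0 (s : 'I_k.+1) := lab j0 s.
have lab_injS j0 m : (0 < m)%N -> (j0 == 1%N) || (1 < m)%N -> (1 <= j0 <= d)%N ->
    {in S m &, injective (labo j0)}.
  move=> m0 jm j0d s1 s2; rewrite !inE => h1 h2 e; apply: val_inj.
  have vv (s : 'I_k.+1) : (m <= s)%N -> hp_valid k d j0 s.
    by move: (ltn_ord s) m0 jm j0d; rewrite /hp_valid; lia.
  by have [_] := lab_inj (vv _ h1) (vv _ h2) e.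
rewrite /hp_edge; case: (j =P 1%N) => [j1 | j1].
  have -> : hp_edge1 n k lab = labo 1%N @: S 1%N.
    apply/setP => v; rewrite inE; apply/existsP/imsetP => -[s].
      by case/andP => s1 /eqP ->; exists s; rewrite ?inE.
    by rewrite inE => s1 ->; exists s; rewrite s1 eqxx.
  rewrite card_in_imset ?card_ord_geq ?subn1 //; apply: lab_injS; rewrite ?j1 //; lia.
have -> : hp_edgej n k lab j = lab j.-1 k |: labo j @: S 2.
  apply/setP => v; rewrite !inE; congr (_ || _); apply/existsP/imsetP => -[s].
    by case/andP => s2 /eqP ->; exists s; rewrite ?inE.
  by rewrite inE => s2 ->; exists s; rewrite s2 eqxx.
rewrite cardsU1 card_in_imset ?card_ord_geq; last by apply: lab_injS => //; lia.
suff -> : lab j.-1 k \notin labo j @: S 2 by rewrite add1n subn2; lia.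
apply/imsetP => -[s]; rewrite inE => s2 e.
have v1 : hp_valid k d j.-1 k by move: j1 jd k_ge3; rewrite /hp_valid; lia.
have v2 : hp_valid k d j s by move: (ltn_ord s) s2 j1 jd; rewrite /hp_valid; lia.
by have [] := lab_inj v1 v2 e; lia.
Qed.

Lemma hp_edge_neq j : (1 <= j < d)%N -> edge j != edge j.+1.
Proof.
move=> jd; have v : hp_valid k d j.+1 2 by rewrite /hp_valid; lia.
apply/negP => /eqP e.
have : lab j.+1 2 \in edge j by rewrite e mem_hp_edge ?eqxx //; lia.
by rewrite mem_hp_edge //; lia.
Qed.

Variable E : {set {set 'I_n}}.
Hypothesis d_ge2 : (2 <= d)%N.
Hypothesis E_def : E = hp_edge1 n k lab |: [set hp_edgej n k lab j | j : 'I_d.+1 & (2 <= j)%N].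

Lemma hyperpath_edgeP e : reflect (exists2 j, (1 <= j <= d)%N & e = edge j) (e \in E).
Proof.
rewrite E_def !inE; apply: (iffP orP) => [[/eqP -> | /imsetP [j j2 ->]] | [j jd ->]].
- by exists 1%N => //; apply: ltnW.
- rewrite inE in j2; have := ltn_ord j; exists j; first lia.
  by rewrite /hp_edge ifN //; lia.
have jd1 : (j < d.+1)%N by lia.
rewrite /hp_edge; case: (j =P 1%N) => [_|j1]; [by left | right].
by apply/imsetP; exists (Ordinal jd1) => //; rewrite inE /=; lia.
Qed.

Lemma hyperpath_uniform e : e \in E -> #|e| = k.
Proof. by case/hyperpath_edgeP => j jd ->; apply: card_hp_edge. Qed.

Lemma hyperpath_incident j s : hp_valid k d j s ->
  [set e in E | lab j s \in e] =
  edge j |: (if (s == k) && (j < d)%N then [set edge j.+1] else set0).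
Proof.
move=> v; have jd : (1 <= j <= d)%N by move: v; rewrite /hp_valid; lia.
have edgeE j' : (1 <= j' <= d)%N -> edge j' \in E by move=> j'd; apply/hyperpath_edgeP; exists j'.
apply/setP => e; rewrite !inE; apply/andP/idP => [[/hyperpath_edgeP [j' j'd ->]] | ].
  rewrite mem_hp_edge // => /orP [/eqP -> | /andP [/eqP -> /eqP ej']]; first by rewrite eqxx.
  by rewrite ej' eqxx ifT ?inE ?eqxx ?orbT //; lia.
case/orP => [/eqP -> | ]; first by rewrite edgeE // mem_hp_edge ?eqxx.
case: ifP => [/andP [/eqP sk jd'] | _]; rewrite inE // => /eqP ->.
split; first by apply: edgeE; lia.
by rewrite mem_hp_edge // ?sk ?eqxx ?orbT; lia.
Qed.

Lemma hdeg_hyperpath j s : hp_valid k d j s ->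
  hdeg n E (lab j s) = (1 + ((s == k) && (j < d)%N))%N.
Proof.
move=> v; rewrite /hdeg hyperpath_incident //.
case: ifP => [/andP [_ jd] | _]; last by rewrite setU0 cards1.
by rewrite cardsU1 cards1 inE hp_edge_neq //; move: v; rewrite /hp_valid; lia.
Qed.

Lemma sum_hyperpath_incident (V : zmodType) j s (F : {set 'I_n} -> V) : hp_valid k d j s ->
  \sum_(e in [set e in E | lab j s \in e]) F e =
  F (edge j) + (if (s == k) && (j < d)%N then F (edge j.+1) else 0).
Proof.
move=> v; rewrite hyperpath_incident //.
case: ifP => [/andP [_ jd] | _]; last by rewrite setU0 big_set1 addr0.
by rewrite big_setU1 ?big_set1 // inE hp_edge_neq //; move: v; rewrite /hp_valid; lia.
Qed.

Variable R : realType.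

Lemma hyperpath_eigenvalue2 : is_H_eigenvalue R n k (laplacian R n k E) 2.
Proof.
pose u := lab 1%N k; have vu : hp_valid k d 1 k by rewrite /hp_valid; lia.
exists (fun v => (v == u)%:R); split; first by exists u; rewrite eqxx oner_neq0.
move=> i; rewrite tmul_laplacian_indicator //; last exact: hyperpath_uniform.
have [-> | iu] := eqVneq i u.
  by rewrite hdeg_hyperpath // eqxx /= expr1n d_ge2.
by rewrite mulr0n expr0n (_ : (k.-1 == 0)%N = false) ?mulr0 //; lia.
Qed.

Section Eigenvector.
Hypothesis k_odd : odd k.
Hypothesis lab_surj : forall v : 'I_n, exists j s, hp_valid k d j s /\ v = lab j s.
Variables (x : 'I_n -> R) (mu : R).
Hypothesis x_eigen : forall i, tmul R n k (laplacian R n k E) x i = mu * x i ^+ k.-1.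

(* (j, 2) is a degree-one vertex of edge j because k >= 3. *)
Local Notation a j := (x (lab j 2)).
Local Notation y j := (x (lab j k)).
Local Notation P j := (\prod_(u in edge j) x u).

Lemma hyperpath_eigen_eq j s : hp_valid k d j s ->
  (x (lab j s) ^+ k - P j) +
  (if (s == k) && (j < d)%N then x (lab j s) ^+ k - P j.+1 else 0) = mu * x (lab j s) ^+ k.
Proof.
move=> v; rewrite -(sum_hyperpath_incident (fun e => x (lab j s) ^+ k - \prod_(u in e) x u) v).
rewrite -mulr_tmul_laplacian_uniform; [| lia | exact: hyperpath_uniform].
by rewrite x_eigen mulrCA -exprS prednK //; lia.
Qed.

Lemma hyperpath_pendant_prod j : (1 <= j <= d)%N -> P j = (1 - mu) * a j ^+ k.
Proof.
move=> jd; have v : hp_valid k d j 2 by rewrite /hp_valid; lia.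
by have := hyperpath_eigen_eq v; rewrite ifF ?addr0; [lra | lia].
Qed.

Lemma hyperpath_pendant_value j s : mu != 1 -> hp_valid k d j s ->
  ~~ ((s == k) && (j < d)%N) -> x (lab j s) = a j.
Proof.
move=> mu1 v ns; apply: (oddX_inj k_odd); apply: (mulfI (_ : 1 - mu != 0)).
  by rewrite subr_eq0 eq_sym.
rewrite /= -hyperpath_pendant_prod; last by move: v; rewrite /hp_valid; lia.
by have := hyperpath_eigen_eq v; rewrite (negPf ns) addr0; lra.
Qed.

Lemma hyperpath_edge_value j u : mu != 1 -> (1 <= j <= d)%N -> u \in edge j ->
  ((1 < j)%N -> u != lab j.-1 k) -> ((j < d)%N -> u != lab j k) -> x u = a j.
Proof.
move=> mu1 jd; have [j' [s' [v' ->]]] := lab_surj u.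
rewrite mem_hp_edge //; case/orP => [/eqP jj' | /andP [/eqP sk /eqP jj']] h1 h2.
  rewrite -jj' in v' h2 *; apply: hyperpath_pendant_value => //.
  by apply/negP => /andP [/eqP sk jd']; move: (h2 jd'); rewrite sk eqxx.
have j1 : (1 < j)%N by move: v'; rewrite /hp_valid; lia.
by move: (h1 j1); rewrite jj' sk eqxx.
Qed.

Lemma hyperpath_prod_first : mu != 1 -> P 1 = y 1 * a 1 ^+ k.-1.
Proof.
have v1 : hp_valid k d 1 k by rewrite /hp_valid; lia.
move=> mu1; rewrite (prodr_const_but1 (z := lab 1%N k) (c := a 1%N)) ?card_hp_edge //; try lia.
- by rewrite mem_hp_edge ?eqxx //; lia.
- by move=> u ue uk; apply: hyperpath_edge_value => //; lia.
Qed.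

Lemma hyperpath_prod_inner j : mu != 1 -> (1 < j < d)%N -> P j = y j.-1 * y j * a j ^+ k.-2.
Proof.
move=> mu1 jd; have v1 : hp_valid k d j.-1 k by rewrite /hp_valid; lia.
have v2 : hp_valid k d j k by rewrite /hp_valid; lia.
rewrite (prodr_const_but2 (z := lab j.-1 k) (z' := lab j k) (c := a j)) ?card_hp_edge //; try lia.
- by rewrite mem_hp_edge //; lia.
- by rewrite mem_hp_edge ?eqxx //; lia.
- by apply/eqP => /(lab_inj v1 v2) []; lia.
- by move=> u ue u1 u2; apply: hyperpath_edge_value => //; lia.
Qed.

Lemma hyperpath_prod_last : mu != 1 -> P d = y d.-1 * a d ^+ k.-1.
Proof.
have v : hp_valid k d d.-1 k by rewrite /hp_valid; lia.
move=> mu1; rewrite (prodr_const_but1 (z := lab d.-1 k) (c := a d)) ?card_hp_edge //; try lia.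
- by rewrite mem_hp_edge //; lia.
- by move=> u ue uk; apply: hyperpath_edge_value => //; lia.
Qed.

Lemma hyperpath_junction j : (1 <= j < d)%N ->
  (y j ^+ k - P j) + (y j ^+ k - P j.+1) = mu * y j ^+ k.
Proof.
move=> jd; have v : hp_valid k d j k by rewrite /hp_valid; lia.
by have := hyperpath_eigen_eq v; rewrite eqxx /= ifT //; lia.
Qed.

Lemma hyperpath_eigenvector_eq0 : 2 < mu -> forall i, x i = 0.
Proof.
move=> mu2; have mu1 : mu != 1 by apply/eqP => mu1; move: mu2; rewrite mu1; lra.
have [a0 y0] := chain_trivial (a := fun j => a j) (y := fun j => y j) (P := fun j => P j)
  k_odd k_ge3 d_ge2 mu2 hyperpath_pendant_prod hyperpath_junction (hyperpath_prod_first mu1)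
  (fun j => @hyperpath_prod_inner j mu1) (hyperpath_prod_last mu1).
move=> i; have [j [s [v ->]]] := lab_surj i.
have jd : (1 <= j <= d)%N by move: v; rewrite /hp_valid; lia.
have [/andP [/eqP -> jd'] | ns] := boolP ((s == k) && (j < d)%N); first by apply: y0; lia.
by rewrite hyperpath_pendant_value ?a0.
Qed.

End Eigenvector.

Lemma hyperpath_eigenvalue_le2 mu : odd k ->
  (forall v : 'I_n, exists j s, hp_valid k d j s /\ v = lab j s) ->
  is_H_eigenvalue R n k (laplacian R n k E) mu -> mu <= 2.
Proof.
move=> k_odd lab_surj [x [[i xi] x_eigen]]; rewrite leNgt; apply/negP => mu2.
by rewrite (hyperpath_eigenvector_eq0 k_odd lab_surj x_eigen mu2) eqxx in xi.
Qed.

End Hyperpath.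

Theorem proposition4p2 (R : realType) (k r n : nat) (E : {set {set 'I_n}}) :
  odd k -> (3 <= k)%N -> (3 <= r)%N -> is_hyperpath k r n E ->
  is_largest_H_eigenvalue R n k (laplacian R n k E) 2.
Proof.
move=> k_odd k_ge3 r_ge3 [lab [lab_inj lab_surj E_def]].
have r_ge2 : (2 <= r)%N by apply: ltnW.
split; first exact: (hyperpath_eigenvalue2 lab_inj k_ge3 r_ge2 E_def).
by move=> mu; apply: (hyperpath_eigenvalue_le2 lab_inj k_ge3 r_ge2 E_def k_odd lab_surj).
Qed.
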